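(* Consider the UAV Persistent Service model with parameters $f>0$, $c\ge0$ and displacement times $g_1,\dots,g_N>0$ with $2g_i<f$, and let $\bar g=\frac1N\sum_{i=1}^N g_i$. Let $M_{het}$ be the minimum number of UAVs of a feasible schedule for these heterogeneous displacement times, and let $M_{hom}=N+\left\lceil\frac{c+2\bar g}{f-2\bar g}N\right\rceil$ be the minimum number of UAVs of a feasible schedule in the homogeneous instance with the same $f,c,N$ and all displacement times equal to $\bar g$. Then $M_{het}\ge M_{hom}$.
   Context: UAV Persistent Service model: there is a single recharging station (RS) and a finite set of $N$ aerial locations, served by identical UAVs. A UAV with a full battery can fly for at most $f$ time units; replacing/recharging its battery at the RS takes $c$ time units. Flying between the RS and location $i$ (either direction) takes $g_i$ time units. A UAV's activity consists of sorties: it leaves the RS fully charged, flies to one location, stays there (covering it), and flies back to the RS, with total airborne time of the sortie at most $f$; it then spends $c$ time units recharging at the RS (possibly followed by idle time) before its next sortie. At time $0$ each UAV is fully charged, either at the RS or at a location. A location is covered at time $t$ if some UAV is present at it at time $t$. A schedule is feasible if every location is covered at every time $t\ge0$. *)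

From HB Require Import structures.
From mathcomp Require Import all_boot all_order all_algebra.
From mathcomp Require Import reals.
Set Implicit Arguments. Unset Strict Implicit. Unset Printing Implicit Defensive.
Import Order.TTheory GRing.Theory Num.Theory.
Local Open Scope ring_scope.

(* A sortie: the UAV departs the RS at time [dep], flies [g loc] to location
   [loc], stays there for [stay] time units, and flies [g loc] back to the RS.
   For a UAV that is (fully charged) at a location at time 0, its first
   sortie is encoded with virtual departure time [dep = - g loc]: it is then
   present at [loc] on [0, stay] and its real airborne time is [stay + g loc]. *)
Record sortie (N : nat) (R : Type) := Sortie {
  s_loc : 'I_N ;
  s_dep : R ;
  s_stay : R }.

(* The activity of one UAV: [at_loc0] says whether at time 0 the UAV is at a
   location (true) or at the RS (false); [plan n] is its n-th sortie, or None
   if it performs fewer than n+1 sorties. *)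
Record uav_plan (N : nat) (R : Type) := UavPlan {
  at_loc0 : bool ;
  plan : nat -> option (sortie N R) }.

Section Model.
Variables (R : realType) (N : nat) (f c : R) (g : 'I_N -> R).

Definition arrival (s : sortie N R) : R := s_dep s + g (s_loc s).
Definition departure_loc (s : sortie N R) : R := arrival s + s_stay s.
Definition return_rs (s : sortie N R) : R := departure_loc s + g (s_loc s).

Definition valid_plan (u : uav_plan N R) : Prop :=
  (forall n, plan u n.+1 <> None -> plan u n <> None) /\
  (forall n s, plan u n = Some s -> 0 <= s_stay s) /\
  (forall s, plan u 0 = Some s ->
     if at_loc0 u then s_dep s = - g (s_loc s) /\ s_stay s + g (s_loc s) <= f
     else 0 <= s_dep s /\ 2 * g (s_loc s) + s_stay s <= f) /\
  (* later sorties: full battery flight bound, and recharge of c after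
     returning from the previous sortie (possibly followed by idle time) *)
  (forall n s s', plan u n = Some s -> plan u n.+1 = Some s' ->
     2 * g (s_loc s') + s_stay s' <= f /\ return_rs s + c <= s_dep s').

Definition covered (m : nat) (S : 'I_m -> uav_plan N R) (j : 'I_N) (t : R)
  : Prop :=
  exists k n s, plan (S k) n = Some s /\ s_loc s = j /\
                arrival s <= t /\ t <= departure_loc s.

Definition feasible_schedule (m : nat) (S : 'I_m -> uav_plan N R) : Prop :=
  (forall k, valid_plan (S k)) /\
  (forall j t, 0 <= t -> covered S j t).

End Model.

(* Give location i the weight W i = (f + c) / (f - 2 g i), the number of UAVs
   needed to keep it covered in steady state.  A sortie staying s at i has
   weighted stay W i * s at most the duration 2 g i + s + c of its cycle, so up
   to a horizon T every UAV accumulates a weighted stay of at most T + O(1),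
   while coverage forces a total stay of at least T at every location.  Letting
   T grow yields sum_i W i <= m.  Convexity of 1/x bounds sum_i W i from below
   by (f + c) N / (f - 2 gbar) = N + (c + 2 gbar) N / (f - 2 gbar), and m is an
   integer. *)

From HB Require Import structures.
From mathcomp Require Import all_boot all_order all_algebra.
From mathcomp Require Import reals.
From mathcomp Require Import ring lra.
Import Order.TTheory GRing.Theory Num.Theory.
Local Open Scope ring_scope.
Set Implicit Arguments. Unset Strict Implicit.

Lemma interval_cover_le_sum (R : realFieldType) (I : finType) (P : pred I)
    (a b : I -> R) (T : R) :
  (forall i, P i -> a i <= b i) ->
  (forall t, 0 <= t <= T -> exists2 i, P i & a i <= t <= b i) ->
  T <= \sum_(i | P i) (b i - a i).
Proof.
move=> le_ab; have [n] := ubnP #|P|; elim: n P T le_ab => // n IH P T le_ab.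
move=> P_lt_n cover.
have sum_ge0 (Q : pred I) : (forall i, Q i -> P i) -> 0 <= \sum_(i | Q i) (b i - a i).
  by move=> QP; apply: sumr_ge0 => i /QP /le_ab; rewrite subr_ge0.
have [T_lt0 | T_ge0] := ltrP T 0; first by apply: le_trans (ltW T_lt0) (sum_ge0 P _).
have [j Pj /andP[aj_le_T T_le_bj]] : exists2 j, P j & a j <= T <= b j.
  by apply: cover; rewrite T_ge0 lexx.
rewrite (bigD1 j Pj) /=; set rest := \sum_(i | _) _.
have rest_ge0 : 0 <= rest by apply: sum_ge0 => i /andP[].
suff : a j <= rest by lra.
rewrite leNgt; apply/negP => rest_lt_aj.
have [rest_lt_t t_lt_aj] := midf_lt rest_lt_aj.
set t := (rest + a j) / 2 in rest_lt_t t_lt_aj.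
suff : t <= rest by rewrite leNgt rest_lt_t.
rewrite /rest (eq_bigl [predD1 P & j]) => [|i]; last by rewrite /= andbC.
apply: IH => [i /andP[_ /le_ab] //||s /andP[s_ge0 s_le_t]].
  by move: P_lt_n; rewrite (cardD1 j) [j \in P]Pj.
have [i Pi /andP[ai_le_s s_le_bi]] : exists2 i, P i & a i <= s <= b i.
  by apply: cover; rewrite s_ge0 /=; lra.
exists i; last by rewrite ai_le_s s_le_bi.
rewrite !inE [i \in P]Pi andbT; apply: contraTneq ai_le_s => ->.
by rewrite -ltNge (le_lt_trans s_le_t).
Qed.

Lemma le_of_linear_bound (R : realFieldType) (x y C : R) :
  (forall t, 0 <= t -> t * x <= t * y + C) -> x <= y.
Proof.
move=> bound; rewrite leNgt; apply/negP => y_lt_x.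
have xy_gt0 : 0 < x - y by rewrite subr_gt0.
pose t := (`|C| + 1) / (x - y).
have t_ge0 : 0 <= t by rewrite divr_ge0 ?ltW //; have := normr_ge0 C; lra.
have : t * (x - y) = `|C| + 1 by rewrite divfK ?gt_eqF.
have := bound t t_ge0; have := ler_norm C; lra.
Qed.

Lemma exists_pos_lower_bound (R : realDomainType) (I : finType) (x : I -> R) :
  (forall i, 0 < x i) -> exists2 d, 0 < d & forall i, d <= x i.
Proof.
move=> x_gt0; exists (\big[Order.min/1]_i x i); last by move=> i; apply: bigmin_le.
by elim/big_ind: _ => // a b a_gt0 b_gt0; rewrite lt_min a_gt0.
Qed.

Lemma tangent_le_inv (R : realFieldType) (a b : R) : 0 < a -> 0 < b ->
  (2 * b - a) / b ^+ 2 <= a^-1.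
Proof.
move=> a_gt0 b_gt0; rewrite ler_pdivrMr ?exprn_gt0 // [a^-1 * _]mulrC ler_pdivlMr //.
by have := sqr_ge0 (a - b); rewrite !expr2; nra.
Qed.

Lemma card_div_mean_le_sum_inv (R : realFieldType) (n : nat) (x : 'I_n -> R) :
  (forall i, 0 < x i) -> n%:R / ((\sum_i x i) / n%:R) <= \sum_i (x i)^-1.
Proof.
case: n x => [|n] x x_gt0; first by rewrite !big_ord0 mulr0n mul0r.
have s_gt0 : 0 < \sum_i x i.
  by rewrite (bigD1 ord0) //= ltr_pwDl // sumr_ge0 // => i _; apply: ltW.
set s := \sum_i x i in s_gt0 *; set b := s / n.+1%:R.
have b_gt0 : 0 < b by rewrite divr_gt0.
(* Sum the tangent lines of the convex function 1/x at the mean b. *)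
have : \sum_i (2 * b - x i) / b ^+ 2 <= \sum_i (x i)^-1.
  by apply: ler_sum => i _; apply: tangent_le_inv.
apply: le_trans; rewrite -mulr_suml big_split /= sumrN sumr_const card_ord -/s.
rewrite le_eqVlt; apply/orP; left; apply/eqP; rewrite /b -mulr_natr; field.
by rewrite !gt_eqF // -(natrD R 1 n) ltr0n.
Qed.

Lemma weighted_stay_le_cycle (R : realFieldType) (f c a s : R) :
  a < f -> 0 <= a + c -> 0 <= s <= f - a -> (f + c) / (f - a) * s <= a + s + c.
Proof.
move=> a_lt_f ac_ge0 /andP[s_ge0 s_le]; rewrite mulrAC ler_pdivrMr ?subr_gt0 //.
have : 0 <= (a + c) * (f - a - s) by rewrite mulr_ge0 // subr_ge0.
nra.
Qed.

Section Model.
Variables (R : realType) (N : nat) (f c : R) (g : 'I_N -> R).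
Hypotheses (f_gt0 : 0 < f) (c_ge0 : 0 <= c) (g_gt0 : forall i, 0 < g i).
Hypothesis two_g_lt_f : forall i, 2 * g i < f.

Definition stay_by (T : R) (j : 'I_N) (u : uav_plan N R) (n : nat) : R :=
  if plan u n is Some s then
    if (s_loc s == j) && (arrival g s <= T) then s_stay s else 0
  else 0.

Definition weighted_stay_by (W : 'I_N -> R) (T : R) (u : uav_plan N R) n : R :=
  if plan u n is Some s then
    if arrival g s <= T then W (s_loc s) * s_stay s else 0
  else 0.

Lemma sum_weighted_stay_by W T u n :
  \sum_j W j * stay_by T j u n = weighted_stay_by W T u n.
Proof.
rewrite /stay_by /weighted_stay_by; case: (plan u n) => [s|]; last first.
  by rewrite big1 // => j _; rewrite mulr0.
case: ifP => arr_le; last by rewrite big1 // => j _; rewrite andbF mulr0.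
rewrite (bigD1 (s_loc s)) //= eqxx big1 ?addr0 // => j /negbTE j_neq.
by rewrite eq_sym j_neq mulr0.
Qed.

Section Plan.
Variable u : uav_plan N R.
Hypothesis u_valid : valid_plan f c g u.

Lemma plan_prev n s' : plan u n.+1 = Some s' -> exists s, plan u n = Some s.
Proof.
case: u_valid => seg _ plan_n; case e: (plan u n) => [s|]; first by exists s.
by have := seg n; rewrite plan_n e; case.
Qed.

Lemma stay_ge0 n s : plan u n = Some s -> 0 <= s_stay s.
Proof. by case: u_valid => _ [+ _]; apply. Qed.

Lemma dep_next n s s' : plan u n = Some s -> plan u n.+1 = Some s' ->
  s_dep s + 2 * g (s_loc s) + s_stay s + c <= s_dep s'.
Proof.
case: u_valid => _ [_ [_ next]] plan_n plan_n1; have [_] := next _ _ _ plan_n plan_n1.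
rewrite /return_rs /departure_loc /arrival; lra.
Qed.

Lemma later_stay_le n s : plan u n.+1 = Some s -> s_stay s <= f - 2 * g (s_loc s).
Proof.
move=> plan_n1; have [s0 plan_n] := plan_prev plan_n1.
case: u_valid => _ [_ [_ next]]; have [] := next _ _ _ plan_n plan_n1; lra.
Qed.

Lemma first_dep_ge s : plan u 0 = Some s -> - f <= s_dep s.
Proof.
case: u_valid => _ [_ [first _]] /first; have := two_g_lt_f (s_loc s).
have := g_gt0 (s_loc s); case: (at_loc0 u) => ? ? []; lra.
Qed.

Lemma stay_le n s : plan u n = Some s -> s_stay s <= f.
Proof.
have := g_gt0 (s_loc s); case: n => [|n] g_pos plan_n; last first.
  by have := later_stay_le plan_n; lra.
case: u_valid => _ [_ [/(_ _ plan_n) + _]]; case: (at_loc0 u) => -[]; lra.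
Qed.

Lemma dep_ge_index d n s : (forall i, d <= g i) -> plan u n = Some s ->
  - f + 2 * d * n%:R <= s_dep s.
Proof.
move=> d_le_g; elim: n s => [|n IH] s' plan_n1.
  by rewrite mulr0 addr0; apply: first_dep_ge.
have [s plan_n] := plan_prev plan_n1; have := IH _ plan_n.
have := dep_next plan_n plan_n1; have := stay_ge0 plan_n; have := d_le_g (s_loc s).
have := c_ge0; rewrite -(natr1 n) mulrDr mulr1; lra.
Qed.

Section WeightedStay.
Variables (W : 'I_N -> R) (M T : R).
Hypotheses (M_ge0 : 0 <= M) (T_ge0 : 0 <= T).
Hypothesis W_le_M : forall i s, 0 <= s <= f -> W i * s <= M.
Hypothesis W_cycle : forall i s, 0 <= s <= f - 2 * g i -> W i * s <= 2 * g i + s + c.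

Local Definition budget n : R :=
  if plan u n is Some s then
    if arrival g s <= T then s_dep s + f else T + f + M
  else T + f + M.

Lemma budget_le n : budget n <= T + f + M.
Proof.
rewrite /budget; case e: (plan u n) => [s|] //; case: ifP => // arr_le.
by move: arr_le; rewrite /arrival; have := g_gt0 (s_loc s); have := M_ge0; lra.
Qed.

Lemma budget_add_weighted_stay_by n :
  budget n + weighted_stay_by W T u n <= T + f + M.
Proof.
have := M_ge0; rewrite /budget /weighted_stay_by.
case e: (plan u n) => [s|]; last lra.
case: ifP => arr_le; last lra.
have : W (s_loc s) * s_stay s <= M by apply: W_le_M; rewrite (stay_ge0 e) (stay_le e).
by move: arr_le; rewrite /arrival; have := g_gt0 (s_loc s); lra.
Qed.

(* Each cycle after the first pays for its weighted stay with the time between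
   two departures, so the weighted stays before an active sortie n sum to at
   most M + (s_dep + f); after the last active sortie the bound freezes. *)
Lemma weighted_stay_sum_le_budget n :
  \sum_(0 <= i < n) weighted_stay_by W T u i <= M + budget n.
Proof.
have M0 := M_ge0; have T0 := T_ge0; have f0 := f_gt0; have c0 := c_ge0.
elim: n => [|n IH].
  rewrite big_nil /budget; case e: (plan u 0) => [s|]; last lra.
  case: ifP => _; last lra.
  by have := first_dep_ge e; lra.
rewrite (_ : \sum_(0 <= i < n.+1) _ =
  \sum_(0 <= i < n) weighted_stay_by W T u i + weighted_stay_by W T u n);
  last by rewrite big_nat_recr.
have [inactive | [s' e' arr']] : budget n.+1 = T + f + M
    \/ exists2 s', plan u n.+1 = Some s' & arrival g s' <= T.
- rewrite /budget; case: (plan u n.+1) => [s'|]; last by left.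
  by case: ifP => arr'; [right; exists s' | left].
- by rewrite inactive; have := budget_add_weighted_stay_by n; lra.
have [s e] := plan_prev e'; have gap := dep_next e e'.
have stay_s := stay_ge0 e; have g_s := g_gt0 (s_loc s).
have arr : arrival g s <= T.
  by move: arr'; rewrite /arrival; have := g_gt0 (s_loc s'); lra.
have -> : budget n.+1 = s_dep s' + f by rewrite /budget e' arr'.
have -> : weighted_stay_by W T u n = W (s_loc s) * s_stay s by rewrite /weighted_stay_by e arr.
case: n IH e e' gap {arr'} arr => [|n] IH e e' gap arr.
  have := first_dep_ge e; have : W (s_loc s) * s_stay s <= M.
    by apply: W_le_M; rewrite stay_s (stay_le e).
  by rewrite big_nil; lra.
have : W (s_loc s) * s_stay s <= 2 * g (s_loc s) + s_stay s + c.
  by apply: W_cycle; rewrite stay_s (later_stay_le e).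
by move: IH; rewrite /budget e arr; lra.
Qed.

Lemma weighted_stay_sum_le B :
  \sum_(n < B) weighted_stay_by W T u n <= T + f + 2 * M.
Proof.
rewrite -(big_mkord xpredT); apply: le_trans (weighted_stay_sum_le_budget B) _.
by have := budget_le B; lra.
Qed.

End WeightedStay.

End Plan.

Section Schedule.
Variables (m : nat) (S : 'I_m -> uav_plan N R).
Hypothesis S_feasible : feasible_schedule f c g S.

Lemma sortie_index_lt d T k n s : 0 < d -> (forall i, d <= g i) ->
  plan (S k) n = Some s -> arrival g s <= T ->
  (n < (Num.truncn ((T + f) / (2 * d))).+1)%N.
Proof.
move=> d_gt0 d_le_g plan_n arr_le; rewrite -(ltr_nat R).
apply: le_lt_trans (truncnS_gt _); rewrite ler_pdivlMr ?mulr_gt0 // mulrC.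
have := dep_ge_index (S_feasible.1 k) d_le_g plan_n; move: arr_le.
by rewrite /arrival; have := g_gt0 (s_loc s); lra.
Qed.

Lemma time_le_sum_stay_by T : 0 <= T ->
  exists B, forall j, T <= \sum_(k < m) \sum_(n < B) stay_by T j (S k) n.
Proof.
move=> T_ge0; have [d d_gt0 d_le_g] := exists_pos_lower_bound g_gt0.
pose B := (Num.truncn ((T + f) / (2 * d))).+1; exists B => j.
pose P (i : 'I_m * 'I_B) :=
  if plan (S i.1) i.2 is Some s then (s_loc s == j) && (arrival g s <= T) else false.
pose a (i : 'I_m * 'I_B) := if plan (S i.1) i.2 is Some s then arrival g s else 0.
pose b (i : 'I_m * 'I_B) := if plan (S i.1) i.2 is Some s then departure_loc g s else 0.
have -> : \sum_(k < m) \sum_(n < B) stay_by T j (S k) n = \sum_(i | P i) (b i - a i).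
  rewrite pair_big [RHS]big_mkcond; apply: eq_bigr => -[k n] _.
  rewrite /stay_by /P /a /b /=; case: (plan (S k) n) => [s|] //.
  by case: ifP => //; rewrite /departure_loc addrC addKr.
apply: interval_cover_le_sum => [[k n]|t /andP[t_ge0 t_le_T]].
  rewrite /P /a /b /=; case e: (plan (S k) n) => [s|] // _.
  by rewrite /departure_loc lerDl (stay_ge0 (S_feasible.1 k) e).
have [k [n [s [e [loc_s [arr_le dep_ge]]]]]] := S_feasible.2 j t t_ge0.
have n_lt_B : (n < B)%N by apply: sortie_index_lt d_gt0 d_le_g e (le_trans arr_le t_le_T).
exists (k, Ordinal n_lt_B); rewrite /P /a /b /= e ?arr_le ?dep_ge //.
by rewrite loc_s eqxx (le_trans arr_le t_le_T).
Qed.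

Lemma sum_weights_le_uavs (W : 'I_N -> R) : (forall i, 0 <= W i) ->
  (forall i s, 0 <= s <= f - 2 * g i -> W i * s <= 2 * g i + s + c) ->
  \sum_i W i <= m%:R.
Proof.
move=> W_ge0 W_cycle; set Wsum := \sum_i W i; set M := Wsum * f.
have M_ge0 : 0 <= M by rewrite mulr_ge0 ?sumr_ge0 ?ltW.
have W_le_M i s : 0 <= s <= f -> W i * s <= M.
  move=> /andP[s_ge0 s_le_f]; apply: ler_pM => //.
  by rewrite /Wsum (bigD1 i) //= lerDl sumr_ge0.
apply: (@le_of_linear_bound _ _ _ (m%:R * (f + 2 * M))) => T T_ge0.
have [B cover] := time_le_sum_stay_by T_ge0.
have weighted_stay_total :
    \sum_j W j * \sum_(k < m) \sum_(n < B) stay_by T j (S k) n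
    = \sum_(k < m) \sum_(n < B) weighted_stay_by W T (S k) n.
  under eq_bigr do rewrite mulr_sumr; rewrite exchange_big; apply: eq_bigr => k _.
  under eq_bigr do rewrite mulr_sumr; rewrite exchange_big; apply: eq_bigr => n _.
  exact: sum_weighted_stay_by.
have : T * Wsum <= \sum_(k < m) (T + f + 2 * M).
  apply: (le_trans (y := \sum_(k < m) \sum_(n < B) weighted_stay_by W T (S k) n)).
    rewrite -weighted_stay_total mulr_sumr.
    by apply: ler_sum => j _; rewrite mulrC ler_wpM2l.
  apply: ler_sum => k _.
  exact: weighted_stay_sum_le (S_feasible.1 k) W M T M_ge0 T_ge0 W_le_M W_cycle B.
by rewrite sumr_const card_ord -mulr_natr; lra.
Qed.

End Schedule.

End Model.

Theorem theorem5 (R : realType) (N : nat) (f c : R) (g : 'I_N -> R)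
  (hN : (0 < N)%N) (hf : 0 < f) (hc : 0 <= c)
  (hg : forall i, 0 < g i) (hgf : forall i, 2 * g i < f)
  (m : nat) (S : 'I_m -> uav_plan N R) :
  feasible_schedule f c g S ->
  let gbar := (\sum_(i < N) g i) / N%:R in
  (N%:Z + Num.ceil ((c + 2 * gbar) / (f - 2 * gbar) * N%:R) <= m%:Z)%R.
Proof.
move=> feasible /=; set gbar := (\sum_(i < N) g i) / N%:R.
have gap_gt0 i : 0 < f - 2 * g i by rewrite subr_gt0.
pose W i := (f + c) / (f - 2 * g i).
have Wsum_le_m : \sum_i W i <= m%:R.
  apply: (sum_weights_le_uavs hf hc hg hgf feasible) => [i | i s].
    by apply: divr_ge0; [lra | exact: ltW (gap_gt0 i)].
  by apply: weighted_stay_le_cycle; [exact: hgf | have := hg i; lra].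
have N_neq0 : N%:R != 0 :> R by rewrite pnatr_eq0 -lt0n.
have mean_gap : (\sum_i (f - 2 * g i)) / N%:R = f - 2 * gbar.
  by rewrite sumrB sumr_const card_ord -mulr_sumr /gbar; field.
have : (f + c) * (N%:R / (f - 2 * gbar)) <= \sum_i W i.
  rewrite -mean_gap /W -mulr_sumr; apply: ler_wpM2l; first lra.
  exact: card_div_mean_le_sum_inv.
have gbar_gap_gt0 : 0 < f - 2 * gbar.
  rewrite -mean_gap divr_gt0 ?ltr0n // (bigD1 (Ordinal hN)) //= ltr_pwDl //.
  by rewrite sumr_ge0 // => i _; apply: ltW.
have -> : (f + c) * (N%:R / (f - 2 * gbar)) =
    N%:R + (c + 2 * gbar) / (f - 2 * gbar) * N%:R.
  by field; rewrite gt_eqF.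
move=> Wsum_ge; have : Num.ceil ((c + 2 * gbar) / (f - 2 * gbar) * N%:R) <= m%:Z - N%:Z.
  by rewrite ceil_le_int intrB; lra.
lra.
Qed.
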